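(* Let $\mathbb{K}$ be an algebraically closed field of characteristic $p$, with $p=0$ or $p\ge5$. Let $(\Gamma_1,\Gamma_2,\Gamma_3)$ and $(\Delta_1,\Delta_2,\Delta_3)$ be two dual $3$-nets of conic-line type of order $n$ in $PG(2,\mathbb{K})$ (with $n<p$ if $p>0$), where $\Gamma_1\cup\Gamma_2$ and $\Delta_1\cup\Delta_2$ lie on irreducible conics, $\Gamma_3$ lies on a line $\ell$ and $\Delta_3$ lies on a line $s$. If $n\ge5$ and $\Gamma_1=\Delta_1$, then $\ell=s$.
   Context: A dual $3$-net of order $n$ in $PG(2,\mathbb{K})$ is a triple of pairwise disjoint point sets, each of size $n$, such that every line meeting two distinct components meets each component in exactly one point. A dual $3$-net of order $n\ge4$ is of conic-line type if two of its components lie on an irreducible conic and the third lies on a line. *)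

From HB Require Import structures.
From mathcomp Require Import all_boot all_order all_algebra.
Set Implicit Arguments. Unset Strict Implicit. Unset Printing Implicit Defensive.
Import GRing.Theory.
Local Open Scope ring_scope.

(* A nonzero vector of K^3 is normalized when its first nonzero coordinate
   equals 1.  Each point (and each line) of PG(2,K) has exactly one
   normalized homogeneous coordinate vector, so projective equality is
   Leibniz equality on [pt K]. *)
Definition normalized (K : fieldType) (v : 'rV[K]_3) : bool :=
  [exists i : 'I_3, (v 0 i == 1) && [forall j : 'I_3, (j < i)%N ==> (v 0 j == 0)]].

(* Points of PG(2,K); lines are represented by the same type (dual coords). *)
Definition pt (K : fieldType) := {v : 'rV[K]_3 | normalized v}.

Definition inc (K : fieldType) (P L : pt K) : bool :=
  \sum_(i < 3) (val P) 0 i * (val L) 0 i == 0.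

Definition qeval (K : fieldType) (Q : 'M[K]_3) (x : 'rV[K]_3) : K :=
  \sum_(i < 3) \sum_(j < 3) Q i j * x 0 i * x 0 j.

Definition lin (K : fieldType) (u x : 'rV[K]_3) : K := \sum_(i < 3) u 0 i * x 0 i.

(* The quadratic form is irreducible: nonzero and not a product of two
   linear forms (K infinite, so identity of functions = identity of polys). *)
Definition irreducible_conic (K : fieldType) (Q : 'M[K]_3) : Prop :=
  (exists x, qeval Q x != 0) /\
  ~ (exists u v : 'rV[K]_3, forall x, qeval Q x = lin u x * lin v x).

Definition on_conic (K : fieldType) (Q : 'M[K]_3) (P : pt K) : bool :=
  qeval Q (val P) == 0.

Definition meets (K : fieldType) (L : pt K) (A : seq (pt K)) : bool :=
  has (fun P => inc P L) A.

Definition dual3net (K : fieldType) (n : nat) (A1 A2 A3 : seq (pt K)) : Prop :=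
  let comp := [:: A1; A2; A3] in
  [/\ forall i : 'I_3, uniq (nth [::] comp i) /\ size (nth [::] comp i) = n,
      forall i j : 'I_3, i != j ->
        forall P, P \in nth [::] comp i -> P \notin nth [::] comp j &
      forall (L : pt K) (i j : 'I_3), i != j ->
        meets L (nth [::] comp i) -> meets L (nth [::] comp j) ->
        forall k : 'I_3, count (fun P => inc P L) (nth [::] comp k) = 1%N].

(* Choose a frame in which the conic through [G1 ++ G2] is [y^2 = x z], parametrized by
   [m |-> (1 : m : m^2)], the two points of the conic on [l] having parameters [0] and [oo].
   For [x] in [G1] and [y] in [G2] the chord [xy] meets [l] in a point of [G3]; the net
   condition then makes the product of the parameters of [x] and [y] depend only on that
   point, so multiplication by [m x / m x'] permutes the parameters of [G2], and the
   parameters of [G1] are the [n]-th roots of a single constant.  Doing the same for the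
   second net, the two parametrizations of [G1 = D1] differ by a reparametrization of a
   conic, i.e. a Moebius map, sending the [n]-th roots of one constant to [n]-th roots of
   another.  Comparing derivatives at [0] shows that for [n >= 5] (and [n], [n - 1] nonzero
   in [K]) this map is [t |-> k t] or [t |-> k / t]; it therefore preserves [{0, oo}], so
   [l] and [s] pass through the same two points of the conic. *)

From mathcomp Require Import all_boot all_order all_algebra.
From mathcomp Require Import ring.
Import GRing.Theory.
Local Open Scope ring_scope.
Set Implicit Arguments. Unset Strict Implicit. Unset Printing Implicit Defensive.

Section Coordinates.
Variable K : fieldType.

Record vec := V3 { c0 : K; c1 : K; c2 : K }.
Implicit Types u v w x U W V : vec.

Definition i0 : 'I_3 := @Ordinal 3 0 isT.
Definition i1 : 'I_3 := @Ordinal 3 1 isT.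
Definition i2 : 'I_3 := @Ordinal 3 2 isT.

Lemma sum3 (f : 'I_3 -> K) : \sum_(i < 3) f i = f i0 + f i1 + f i2.
Proof.
rewrite !big_ord_recl big_ord0 addr0 addrA.
by congr (f _ + f _ + f _); apply: val_inj.
Qed.

Lemma ord3P (P : 'I_3 -> Prop) : P i0 -> P i1 -> P i2 -> forall i, P i.
Proof.
move=> H0 H1 H2 [[|[|[|m]]] Hm] //.
- by rewrite (_ : Ordinal Hm = i0) //; apply: val_inj.
- by rewrite (_ : Ordinal Hm = i1) //; apply: val_inj.
- by rewrite (_ : Ordinal Hm = i2) //; apply: val_inj.
Qed.

Definition vzero := V3 0 0 0.
Definition vscale (k : K) u := V3 (k * c0 u) (k * c1 u) (k * c2 u).
Definition vcomb (a b c : K) u v w :=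
  V3 (a * c0 u + b * c0 v + c * c0 w) (a * c1 u + b * c1 v + c * c1 w)
     (a * c2 u + b * c2 v + c * c2 w).
Definition dot u v := c0 u * c0 v + c1 u * c1 v + c2 u * c2 v.
Definition cross u v :=
  V3 (c1 u * c2 v - c2 u * c1 v) (c2 u * c0 v - c0 u * c2 v) (c0 u * c1 v - c1 u * c0 v).
Definition det u v w := dot u (cross v w).

Lemma vecP u v : c0 u = c0 v -> c1 u = c1 v -> c2 u = c2 v -> u = v.
Proof. by case: u => ? ? ?; case: v => ? ? ? /= -> -> ->. Qed.

Lemma dotC u v : dot u v = dot v u.
Proof. by case: u v => ? ? ? [? ? ?]; rewrite /dot /=; ring. Qed.

Lemma dot_vscale u k v : dot u (vscale k v) = k * dot u v.
Proof. by case: u v => ? ? ? [? ? ?]; rewrite /dot /=; ring. Qed.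

Lemma dot_vcomb L a b c U W V :
  dot L (vcomb a b c U W V) = a * dot L U + b * dot L W + c * dot L V.
Proof. by case: L U W V => ? ? ? [? ? ?] [? ? ?] [? ? ?]; rewrite /dot /=; ring. Qed.

Lemma vscale_vscale a b u : vscale a (vscale b u) = vscale (a * b) u.
Proof. by case: u => ? ? ?; apply: vecP => /=; ring. Qed.

Lemma vscale_vcomb k a b c U W V :
  vscale k (vcomb a b c U W V) = vcomb (k * a) (k * b) (k * c) U W V.
Proof. by case: U W V => ? ? ? [? ? ?] [? ? ?]; apply: vecP => /=; ring. Qed.

Lemma vscaleK k u : k != 0 -> u = vscale k^-1 (vscale k u).
Proof. by case: u => ? ? ? Hk; apply: vecP => /=; field. Qed.

Lemma vscale_div a b u : b != 0 -> vscale a u = vscale (a / b) (vscale b u).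
Proof. by case: u => ? ? ? Hb; apply: vecP => /=; field. Qed.

Lemma det_vscale k U W V : det (vscale k U) W V = k * det U W V.
Proof. by case: U W V => ? ? ? [? ? ?] [? ? ?]; rewrite /det /dot /=; ring. Qed.

Lemma detC23 u v w : det u v w = - det u w v.
Proof. by case: u v w => ? ? ? [? ? ?] [? ? ?]; rewrite /det /dot /=; ring. Qed.

Lemma det_cycle u v w : det u v w = det v w u.
Proof. by case: u v w => ? ? ? [? ? ?] [? ? ?]; rewrite /det /dot /=; ring. Qed.

Lemma det_dup12 u v : det u u v = 0.
Proof. by case: u v => ? ? ? [? ? ?]; rewrite /det /dot /=; ring. Qed.

Lemma det_dup13 u v : det u v u = 0.
Proof. by case: u v => ? ? ? [? ? ?]; rewrite /det /dot /=; ring. Qed.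

Lemma det_cross13 u v w : det u v w = - dot v (cross u w).
Proof. by case: u v w => ? ? ? [? ? ?] [? ? ?]; rewrite /det /dot /=; ring. Qed.

Lemma dot_cross_l u v : dot u (cross u v) = 0.
Proof. by case: u v => ? ? ? [? ? ?]; rewrite /dot /=; ring. Qed.

Lemma dot_cross_r u v : dot v (cross u v) = 0.
Proof. by case: u v => ? ? ? [? ? ?]; rewrite /dot /=; ring. Qed.

Lemma cross_vcombl (x : K) u v : cross (vcomb 1 x 0 u v v) v = cross u v.
Proof. by case: u v => ? ? ? [? ? ?]; apply: vecP => /=; ring. Qed.

Lemma cross0v v : cross vzero v = vzero.
Proof. by case: v => ? ? ?; apply: vecP => /=; ring. Qed.

Lemma cross_crossl a b v : cross (cross a b) v = vcomb (- dot v b) (dot v a) 0 a b b.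
Proof. by case: a b v => ? ? ? [? ? ?] [? ? ?]; apply: vecP; rewrite /= /dot /=; ring. Qed.

Lemma cross_eq0_scale u v : u <> vzero -> cross u v = vzero -> exists k, v = vscale k u.
Proof.
have solve (x y z w : K) : x != 0 -> x * y - z * w = 0 -> y = w / x * z.
  by move=> Hx /eqP; rewrite subr_eq0 => /eqP E; apply: (mulfI Hx); rewrite E; field.
have solveN (x y z w : K) : x != 0 -> z * w - x * y = 0 -> y = w / x * z.
  by move=> Hx E; apply: solve => //; rewrite -opprB E oppr0.
case: u v => a b c [a' b' c'] /= Hu [E0 E1 E2].
have [Ha|Ha] := eqVneq a 0; last first.
  by exists (a' / a); apply: vecP => /=; [field|exact: solve E2|exact: solveN E1].
have [Hb|Hb] := eqVneq b 0; last first.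
  by exists (b' / b); apply: vecP => /=; [exact: solveN E2|field|exact: solve E0].
have [Hc|Hc] := eqVneq c 0; first by case: Hu; rewrite Ha Hb Hc.
by exists (c' / c); apply: vecP => /=; [exact: solve E1|exact: solveN E0|field].
Qed.

Definition vec_of_row (x : 'rV[K]_3) := V3 (x 0 i0) (x 0 i1) (x 0 i2).
Definition row_of_vec v : 'rV[K]_3 := \row_(j < 3) nth 0 [:: c0 v; c1 v; c2 v] j.

Lemma row_of_vecK v : vec_of_row (row_of_vec v) = v.
Proof. by case: v => a b c; rewrite /vec_of_row /row_of_vec !mxE. Qed.

Definition coords (P : pt K) := vec_of_row (val P).

Lemma incE (P L : pt K) : inc P L = (dot (coords P) (coords L) == 0).
Proof. by rewrite /inc sum3. Qed.

Definition normal_form v :=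
  [\/ c0 v = 1, c0 v = 0 /\ c1 v = 1 | [/\ c0 v = 0, c1 v = 0 & c2 v = 1]].

Lemma coords_normal (P : pt K) : normal_form (coords P).
Proof.
case: P => x Hx; rewrite /normal_form /coords /vec_of_row /=.
case/existsP: Hx => i /andP [/eqP Hi /forallP Hj].
move: i Hi Hj; apply: ord3P => Hi Hj.
- by apply: Or31.
- by apply: Or32; split=> //; apply/eqP; exact: (implyP (Hj i0)).
- by apply: Or33; split=> //; apply/eqP; [exact: (implyP (Hj i0)) | exact: (implyP (Hj i1))].
Qed.

Lemma normal_form_normalized v : normal_form v -> normalized (row_of_vec v).
Proof.
case=> [H|[H H']|[H H' H'']]; apply/existsP.
- exists i0; rewrite !mxE /= H eqxx /=; apply/forallP.
  by apply: (@ord3P (fun j => is_true ((j < i0)%N ==> (row_of_vec v 0 j == 0)))).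
- exists i1; rewrite !mxE /= H' eqxx /=; apply/forallP.
  by apply: (@ord3P (fun j => is_true ((j < i1)%N ==> (row_of_vec v 0 j == 0))));
    rewrite //= !mxE /= H.
- exists i2; rewrite !mxE /= H'' eqxx /=; apply/forallP.
  by apply: (@ord3P (fun j => is_true ((j < i2)%N ==> (row_of_vec v 0 j == 0))));
    rewrite //= !mxE /= ?H ?H'.
Qed.

Lemma coords_inj : injective coords.
Proof.
move=> P Q E; apply: val_inj; apply/rowP => j.
move: E; rewrite /coords /vec_of_row; case=> E0 E1 E2.
by move: j; apply: (@ord3P (fun j => val P 0 j = val Q 0 j)).
Qed.

Lemma coords_scale_inj (P Q : pt K) k : coords P = vscale k (coords Q) -> P = Q.
Proof.
move=> E; apply: coords_inj; move: E.
case: (coords P) (coords_normal P) => a b c; case: (coords Q) (coords_normal Q) => a' b' c'.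
rewrite /normal_form /vscale /=.
have o1 := @oner_neq0 K.
case=> [->|[-> ->]|[-> -> ->]]; case=> [->|[-> ->]|[-> -> ->]]; case;
 rewrite ?mulr0 ?mulr1 => Ea Eb Ec.
all: try (by rewrite Ea eqxx in o1).
all: try (by rewrite Eb eqxx in o1).
all: try (by rewrite Ec eqxx in o1).
all: try (by rewrite -Ea in Eb Ec; rewrite Eb Ec !mul1r).
all: try (by rewrite -Eb in Ec; rewrite Ec !mul1r).
all: try (by rewrite -Ea mul0r in Eb; rewrite Eb eqxx in o1).
all: try (by rewrite -Ea mul0r in Ec; rewrite Ec eqxx in o1).
all: try (by rewrite -Eb mul0r in Ec; rewrite Ec eqxx in o1).
all: by [].
Qed.

Lemma coords_neq0 (P : pt K) : coords P <> vzero.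
Proof.
move=> E; have := coords_normal P; rewrite E /normal_form /=.
have o1 := @oner_neq0 K.
by case=> [|[_]|[_ _]] H; rewrite H eqxx in o1.
Qed.

(* The zero vector is sent to an arbitrary normal form. *)
Definition normalize v :=
  if c0 v != 0 then vscale (c0 v)^-1 v else if c1 v != 0 then vscale (c1 v)^-1 v
  else if c2 v != 0 then vscale (c2 v)^-1 v else V3 1 0 0.

Lemma normalize_normal v : normal_form (normalize v).
Proof.
rewrite /normalize /normal_form /vscale; case: ifP => [/negbTE H|/negbFE/eqP H0].
  by apply: Or31 => /=; rewrite mulVf // H.
case: ifP => [/negbTE H|/negbFE/eqP H1].
  by apply: Or32 => /=; rewrite mulVf ?H // H0 mulr0.
case: ifP => [/negbTE H|/negbFE/eqP H2].
  by apply: Or33 => /=; rewrite mulVf ?H // H0 H1 mulr0.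
by apply: Or31.
Qed.

Lemma normalize_scale v : v <> vzero -> exists2 k, k != 0 & normalize v = vscale k v.
Proof.
move=> Hv; rewrite /normalize; case: ifP => [H|/negbFE/eqP H0].
  by exists (c0 v)^-1; rewrite // invr_eq0 H.
case: ifP => [H|/negbFE/eqP H1].
  by exists (c1 v)^-1; rewrite // invr_eq0 H.
case: ifP => [H|/negbFE/eqP H2].
  by exists (c2 v)^-1; rewrite // invr_eq0 H.
by case: Hv; case: v H0 H1 H2 => /= a b c -> -> ->.
Qed.

Definition pt_of_vec v : pt K :=
  exist _ (row_of_vec (normalize v)) (normal_form_normalized (normalize_normal v)).

Lemma coords_pt_of_vec v : coords (pt_of_vec v) = normalize v.
Proof. by rewrite /coords /= row_of_vecK. Qed.

Lemma cross_coords_neq0 (P Q : pt K) : P != Q -> cross (coords P) (coords Q) <> vzero.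
Proof.
move=> /eqP PQ E; have [k Ek] := cross_eq0_scale (@coords_neq0 P) E.
by apply: PQ; symmetry; apply: coords_scale_inj Ek.
Qed.

Lemma orthogonal2_scale_cross a b v : cross a b <> vzero -> dot v a = 0 -> dot v b = 0 ->
  exists k, v = vscale k (cross a b).
Proof.
move=> Hab Ha Hb; apply: cross_eq0_scale => //.
rewrite cross_crossl Ha Hb.
by case: a b {Hab Ha Hb} => ? ? ? [? ? ?]; apply: vecP => /=; ring.
Qed.

Lemma coords_orthogonal2_eq (l s : pt K) u v : cross u v <> vzero ->
  dot (coords l) u = 0 -> dot (coords l) v = 0 ->
  dot (coords s) u = 0 -> dot (coords s) v = 0 -> l = s.
Proof.
move=> uv lu lv su sv.
have [k Ek] := orthogonal2_scale_cross uv lu lv; have [k' Ek'] := orthogonal2_scale_cross uv su sv.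
have k'0 : k' != 0.
  by apply/eqP => k'0; apply: (@coords_neq0 s); rewrite Ek' k'0; apply: vecP => /=; ring.
by apply: (@coords_scale_inj l s (k / k')); rewrite Ek Ek'; exact: vscale_div.
Qed.

Lemma det_cross13_neq0 u v w : det u v w != 0 -> cross u w <> vzero.
Proof. by move=> H E; move: H; rewrite det_cross13 E /dot /= !mulr0 !addr0 oppr0 eqxx. Qed.

Definition join (P Q : pt K) := pt_of_vec (cross (coords P) (coords Q)).

Lemma inc_join (P Q Z : pt K) : P != Q ->
  inc Z (join P Q) = (det (coords Z) (coords P) (coords Q) == 0).
Proof.
move=> PQ; rewrite incE /join coords_pt_of_vec.
have [k k0 ->] := normalize_scale (cross_coords_neq0 PQ).
rewrite dot_vscale /det.
by apply/eqP/eqP => [/eqP|->]; rewrite ?mulr0 // mulf_eq0 (negbTE k0) => /eqP.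
Qed.

Lemma join_incl (P Q : pt K) : P != Q -> inc P (join P Q).
Proof. by move=> PQ; rewrite inc_join // det_dup12. Qed.

Lemma join_incr (P Q : pt K) : P != Q -> inc Q (join P Q).
Proof. by move=> PQ; rewrite inc_join // det_dup13. Qed.

End Coordinates.

Section QuadraticForms.
Variable K : fieldType.
Implicit Types u v w x U W V : vec K.
Implicit Types Q : 'M[K]_3.

Definition qform Q v :=
  Q i0 i0 * c0 v * c0 v + Q i0 i1 * c0 v * c1 v + Q i0 i2 * c0 v * c2 v +
  Q i1 i0 * c1 v * c0 v + Q i1 i1 * c1 v * c1 v + Q i1 i2 * c1 v * c2 v +
  Q i2 i0 * c2 v * c0 v + Q i2 i1 * c2 v * c1 v + Q i2 i2 * c2 v * c2 v.

Lemma qevalE Q (x : 'rV[K]_3) : qeval Q x = qform Q (vec_of_row x).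
Proof. by rewrite /qeval !sum3 /qform /=; ring. Qed.

Lemma on_conicE Q (P : pt K) : on_conic Q P = (qform Q (coords P) == 0).
Proof. by rewrite /on_conic qevalE. Qed.

Definition polar Q u v := qform Q (vcomb 1 1 0 u v (vzero K)) - qform Q u - qform Q v.

Lemma polarC Q u v : polar Q u v = polar Q v u.
Proof. by case: u v => ? ? ? [? ? ?]; rewrite /polar /qform /=; ring. Qed.

Lemma qform_vscale Q k u : qform Q (vscale k u) = k ^+ 2 * qform Q u.
Proof. by case: u => ? ? ?; rewrite /qform /=; ring. Qed.

Lemma polar_vscale Q k u v : polar Q (vscale k u) v = k * polar Q u v.
Proof. by case: u v => ? ? ? [? ? ?]; rewrite /polar /qform /=; ring. Qed.

Lemma qform_vcomb Q U W V a b c : qform Q (vcomb a b c U W V) =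
  a ^+ 2 * qform Q U + b ^+ 2 * qform Q W + c ^+ 2 * qform Q V +
  a * b * polar Q U W + a * c * polar Q U V + b * c * polar Q W V.
Proof. by case: U W V => ? ? ? [? ? ?] [? ? ?]; rewrite /polar /qform /=; ring. Qed.

Definition grad Q u :=
  V3 ((Q i0 i0 + Q i0 i0) * c0 u + (Q i0 i1 + Q i1 i0) * c1 u + (Q i0 i2 + Q i2 i0) * c2 u)
     ((Q i1 i0 + Q i0 i1) * c0 u + (Q i1 i1 + Q i1 i1) * c1 u + (Q i1 i2 + Q i2 i1) * c2 u)
     ((Q i2 i0 + Q i0 i2) * c0 u + (Q i2 i1 + Q i1 i2) * c1 u + (Q i2 i2 + Q i2 i2) * c2 u).

Lemma polar_grad Q u x : polar Q u x = dot (grad Q u) x.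
Proof. by case: u x => ? ? ? [? ? ?]; rewrite /polar /qform /dot /=; ring. Qed.

Lemma det_cross_grad Q u v :
  det u (cross (grad Q u) (grad Q v)) v = polar Q u v ^+ 2 - 4%:R * qform Q u * qform Q v.
Proof. by case: u v => ? ? ? [? ? ?]; rewrite /polar /qform /det /dot /=; ring. Qed.

Lemma product_not_irreducible Q (a b : vec K) :
  (forall v, qform Q v = dot a v * dot b v) -> ~ irreducible_conic Q.
Proof.
move=> H [_ []]; exists (row_of_vec a), (row_of_vec b) => y.
by rewrite qevalE H /lin !sum3 !mxE.
Qed.

End QuadraticForms.

Section Frames.
Variable K : fieldType.
Implicit Types u v w x U W V X Y Z : vec K.

(* Cramer coordinates of [x] in the frame [(U, W, V)]. *)
Definition fa U W V x := det x W V / det U W V.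
Definition fb U W V x := det U x V / det U W V.
Definition fc U W V x := det U W x / det U W V.

Lemma vcomb_frame U W V x : det U W V != 0 ->
  x = vcomb (fa U W V x) (fb U W V x) (fc U W V x) U W V.
Proof.
case: U W V x => ? ? ? [? ? ?] [? ? ?] [? ? ?]; rewrite /fa /fb /fc /det /dot => HD.
by apply: vecP => /=; field.
Qed.

Lemma fa_vcomb U W V a b c : det U W V != 0 -> fa U W V (vcomb a b c U W V) = a.
Proof. by case: U W V => ? ? ? [? ? ?] [? ? ?]; rewrite /fa /det /dot /= => HD; field. Qed.

Lemma fb_vcomb U W V a b c : det U W V != 0 -> fb U W V (vcomb a b c U W V) = b.
Proof. by case: U W V => ? ? ? [? ? ?] [? ? ?]; rewrite /fb /det /dot /= => HD; field. Qed.

Lemma fc_vcomb U W V a b c : det U W V != 0 -> fc U W V (vcomb a b c U W V) = c.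
Proof. by case: U W V => ? ? ? [? ? ?] [? ? ?]; rewrite /fc /det /dot /= => HD; field. Qed.

Lemma fa_dot U W V x : fa U W V x = dot (vscale (det U W V)^-1 (cross W V)) x.
Proof. by case: U W V x => ? ? ? [? ? ?] [? ? ?] [? ? ?]; rewrite /fa /det /dot /=; ring. Qed.

Lemma fb_dot U W V x : fb U W V x = dot (vscale (det U W V)^-1 (cross V U)) x.
Proof. by case: U W V x => ? ? ? [? ? ?] [? ? ?] [? ? ?]; rewrite /fb /det /dot /=; ring. Qed.

Lemma fc_dot U W V x : fc U W V x = dot (vscale (det U W V)^-1 (cross U W)) x.
Proof. by case: U W V x => ? ? ? [? ? ?] [? ? ?] [? ? ?]; rewrite /fc /det /dot /=; ring. Qed.

Lemma fa_linear U W V a b c X Y Z :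
  fa U W V (vcomb a b c X Y Z) = a * fa U W V X + b * fa U W V Y + c * fa U W V Z.
Proof. by rewrite !fa_dot dot_vcomb. Qed.

Lemma fb_linear U W V a b c X Y Z :
  fb U W V (vcomb a b c X Y Z) = a * fb U W V X + b * fb U W V Y + c * fb U W V Z.
Proof. by rewrite !fb_dot dot_vcomb. Qed.

Lemma fc_linear U W V a b c X Y Z :
  fc U W V (vcomb a b c X Y Z) = a * fc U W V X + b * fc U W V Y + c * fc U W V Z.
Proof. by rewrite !fc_dot dot_vcomb. Qed.

Definition det3 (a b c a' b' c' a'' b'' c'' : K) :=
  a * (b' * c'' - c' * b'') - b * (a' * c'' - c' * a'') + c * (a' * b'' - b' * a'').

Lemma det_vcomb U W V a b c a' b' c' a'' b'' c'' :
  det (vcomb a b c U W V) (vcomb a' b' c' U W V) (vcomb a'' b'' c'' U W V) =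
  det3 a b c a' b' c' a'' b'' c'' * det U W V.
Proof. by case: U W V => ? ? ? [? ? ?] [? ? ?]; rewrite /det3 /det /dot /=; ring. Qed.

Lemma det_frame U W V X Y Z : det U W V != 0 ->
  det X Y Z = det3 (fa U W V X) (fb U W V X) (fc U W V X) (fa U W V Y) (fb U W V Y)
                   (fc U W V Y) (fa U W V Z) (fb U W V Z) (fc U W V Z) * det U W V.
Proof. by move=> HD; rewrite -det_vcomb -!vcomb_frame. Qed.

Lemma exists_det_neq0 u v : cross u v <> vzero K -> exists w, det u w v != 0.
Proof.
have neq0 (e f : K) : e != 0 -> f = - e -> f != 0 by move=> He ->; rewrite oppr_eq0.
case: u v => a b c [a' b' c'] /= H.
have [E0|E0] := eqVneq (b * c' - c * b') 0; last first.
  by exists (V3 1 0 0); apply: neq0 E0 _; rewrite /det /dot /=; ring.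
have [E1|E1] := eqVneq (c * a' - a * c') 0; last first.
  by exists (V3 0 1 0); apply: neq0 E1 _; rewrite /det /dot /=; ring.
have [E2|E2] := eqVneq (a * b' - b * a') 0; last first.
  by exists (V3 0 0 1); apply: neq0 E2 _; rewrite /det /dot /=; ring.
by case: H; rewrite /cross /= E0 E1 E2.
Qed.

Lemma frame_factor_not_irreducible (Q : 'M[K]_3) U W V (a b c a' b' c' : K) :
  det U W V != 0 ->
  (forall x, qform Q x = (a * fa U W V x + b * fb U W V x + c * fc U W V x) *
                         (a' * fa U W V x + b' * fb U W V x + c' * fc U W V x)) ->
  ~ irreducible_conic Q.
Proof.
move=> HD H; pose k := (det U W V)^-1.
pose dU := vscale k (cross W V); pose dW := vscale k (cross V U); pose dV := vscale k (cross U W).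
apply: (@product_not_irreducible _ Q (vcomb a b c dU dW dV) (vcomb a' b' c' dU dW dV)).
by move=> x; rewrite H !(dotC _ x) !dot_vcomb !(dotC x) -fa_dot -fb_dot -fc_dot.
Qed.

End Frames.

Lemma perm_map_stable (T : eqType) (f : T -> T) s :
  uniq s -> {in s, forall x, f x \in s} -> {in s &, injective f} -> perm_eq (map f s) s.
Proof.
move=> us fs fi; have um : uniq (map f s) by rewrite map_inj_in_uniq.
have sub : {subset map f s <= s} by move=> y /mapP [x xs ->]; exact: fs.
have [_ E] := uniq_min_size um sub (eq_leq (esym (size_map f s))).
exact: uniq_perm.
Qed.

Section StableSets.
Variable K : fieldType.
Implicit Types (k : K) (S : seq K).

Lemma translation_stable k S : uniq S -> {in S, forall v, v + k \in S} -> k *+ size S = 0.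
Proof.
move=> uS kS; have pS := perm_map_stable uS kS (in2W (@addIr _ k)).
have : \sum_(v <- map (fun v => v + k) S) v = \sum_(v <- S) v by exact: perm_big.
rewrite big_map big_split /= -[RHS]addr0 => /addrI <-.
by elim: S {uS kS pS} => [|v S IH]; rewrite ?big_nil ?big_cons -?IH //= mulrS.
Qed.

Lemma dilation_stable k S : uniq S -> 0 \notin S -> {in S, forall v, k * v \in S} ->
  k ^+ size S = 1.
Proof.
move=> uS S0 kS; case Sv: S => [//|v S']; rewrite -Sv.
have k0 : k != 0 by apply: contraNneq S0 => k0; rewrite -(mul0r v) -k0 kS // Sv mem_head.
have pS := perm_map_stable uS kS (in2W (mulfI k0)).
have : \prod_(v <- map (fun v => k * v) S) v = \prod_(v <- S) v by exact: perm_big.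
have P0 : \prod_(v <- S) v != 0.
  by rewrite prodf_seq_neq0; apply/allP => w wS; apply: contraNneq S0 => <-.
rewrite big_map big_split /= -[RHS]mul1r => /(mulIf P0) <-.
by elim: S {uS kS pS S0 P0 Sv} => [|w S IH]; rewrite ?big_nil ?big_cons -?IH //= exprS.
Qed.

End StableSets.

Lemma line_meets_conic (K : closedFieldType) (Q : 'M[K]_3) (u v : vec K) :
  cross u v <> vzero K ->
  exists a b, vcomb a b 0 u v v <> vzero K /\ qform Q (vcomb a b 0 u v v) = 0.
Proof.
move=> uv; have vn0 : v <> vzero K by move=> v0; apply: uv; rewrite v0 /cross /=; congr V3; ring.
have [qv0|qvn0] := eqVneq (qform Q v) 0.
  have E : vcomb 0 1 0 u v v = v.
    by case: u v {uv vn0 qv0} => ? ? ? [? ? ?]; apply: vecP => /=; ring.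
  by exists 0, 1; rewrite E.
have [x Hx] := @GRing.solve_monicpoly K 2
  (fun i => if i == 0%N then - qform Q u / qform Q v else - polar Q u v / qform Q v) isT.
rewrite !big_ord_recl big_ord0 /= addr0 in Hx.
exists 1, x; split; first by move=> E; apply: uv; rewrite -(cross_vcombl x) E cross0v.
by rewrite qform_vcomb Hx; field.
Qed.

(* In a frame [(U, W, V)] with [U], [V] on the conic and [W] the pole of the chord [UV],
   suitably scaled, the conic becomes [y^2 = x z]. *)
Lemma conic_standard_frame (K : fieldType) (Q : 'M[K]_3) (U0 V : vec K) :
  irreducible_conic Q -> qform Q U0 = 0 -> qform Q V = 0 -> cross U0 V <> vzero K ->
  exists k W cQ, [/\ k != 0, det (vscale k U0) W V != 0, cQ != 0 &
    forall x, qform Q x =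
      cQ * (fb (vscale k U0) W V x ^+ 2 - fa (vscale k U0) W V x * fc (vscale k U0) W V x)].
Proof.
move=> irrQ qU qV UV; set B := polar Q U0 V.
have B0 : B != 0.
  apply/negP => /eqP B0; have [w Hw] := exists_det_neq0 UV.
  apply: (frame_factor_not_irreducible (a := 0) (b := 1) (c := 0) (a' := polar Q U0 w)
    (b' := qform Q w) (c' := polar Q w V) Hw _ irrQ) => x.
  by rewrite {1}(vcomb_frame x Hw) qform_vcomb qU qV -/B B0; ring.
set W := cross (grad Q U0) (grad Q V).
have UW : polar Q U0 W = 0 by rewrite polar_grad dot_cross_l.
have WV : polar Q W V = 0 by rewrite polarC polar_grad dot_cross_r.
have D0 : det U0 W V != 0 by rewrite det_cross_grad qU qV mulr0 subr0 sqrf_eq0.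
have qW : qform Q W != 0.
  apply/negP => /eqP qW; apply: (frame_factor_not_irreducible (a := 1) (b := 0) (c := 0)
    (a' := 0) (b' := 0) (c' := B) D0 _ irrQ) => x.
  by rewrite {1}(vcomb_frame x D0) qform_vcomb qU qV qW UW WV; rewrite /B; ring.
have k0 : - qform Q W / B != 0 by rewrite mulf_neq0 ?invr_eq0 ?oppr_eq0.
have D1 : det (vscale (- qform Q W / B) U0) W V != 0 by rewrite det_vscale mulf_neq0.
exists (- qform Q W / B), W, (qform Q W); split=> // x.
rewrite {1}(vcomb_frame x D1) qform_vcomb qform_vscale qU !polar_vscale UW WV qV -/B.
by field.
Qed.

Section DualNet.
Variables (K : fieldType) (n : nat) (A1 A2 A3 : seq (pt K)).
Hypothesis net : dual3net n A1 A2 A3.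

Lemma net_uniq_size1 : uniq A1 /\ size A1 = n. Proof. by case: net => H _ _; exact: (H i0). Qed.
Lemma net_uniq_size2 : uniq A2 /\ size A2 = n. Proof. by case: net => H _ _; exact: (H i1). Qed.
Lemma net_uniq_size3 : uniq A3 /\ size A3 = n. Proof. by case: net => H _ _; exact: (H i2). Qed.

Lemma net_disjoint12 P : P \in A1 -> P \notin A2.
Proof. by case: net => _ H _; exact: (H i0 i1 isT). Qed.
Lemma net_disjoint13 P : P \in A1 -> P \notin A3.
Proof. by case: net => _ H _; exact: (H i0 i2 isT). Qed.

Lemma net_count12_3 L : meets L A1 -> meets L A2 -> count (fun P => inc P L) A3 = 1%N.
Proof. by move=> M1 M2; case: net => _ _ H; exact: (H L i0 i1 isT M1 M2 i2). Qed.
Lemma net_count13_2 L : meets L A1 -> meets L A3 -> count (fun P => inc P L) A2 = 1%N.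
Proof. by move=> M1 M2; case: net => _ _ H; exact: (H L i0 i2 isT M1 M2 i1). Qed.
Lemma net_count13_3 L : meets L A1 -> meets L A3 -> count (fun P => inc P L) A3 = 1%N.
Proof. by move=> M1 M2; case: net => _ _ H; exact: (H L i0 i2 isT M1 M2 i2). Qed.
Lemma net_count23_3 L : meets L A2 -> meets L A3 -> count (fun P => inc P L) A3 = 1%N.
Proof. by move=> M1 M2; case: net => _ _ H; exact: (H L i1 i2 isT M1 M2 i2). Qed.

End DualNet.

Lemma meets_inc (K : fieldType) (L P : pt K) s : P \in s -> inc P L -> meets L s.
Proof. by move=> Ps PL; apply/hasP; exists P. Qed.

Definition power_frame (K : fieldType) n (L : vec K) (A : seq (pt K)) U W V (al : K) :=
  [/\ det U W V != 0, dot L U = 0, dot L V = 0, al != 0 &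
      forall P, P \in A -> exists2 m, m ^+ n = al &
        exists2 mu, mu != 0 & coords P = vscale mu (vcomb 1 m (m ^+ 2) U W V)].

Lemma det_reparam (K : fieldType) (a : K) (U W V : vec K) :
  det (vcomb 1 (- a) (a ^+ 2) U W V) (vcomb (- 2%:R) a 0 U W V) U = - a ^+ 3 * det U W V.
Proof. by case: U W V => ? ? ? [? ? ?] [? ? ?]; rewrite /det /dot /=; ring. Qed.

Lemma vcomb_reparam (K : fieldType) (a c r : K) (U W V : vec K) : a != 0 ->
  vscale c (vcomb (r ^+ 2) r 1 U W V) =
  vscale (c / a ^+ 2) (vcomb 1 (1 + a * r) ((1 + a * r) ^+ 2)
      (vcomb 1 (- a) (a ^+ 2) U W V) (vcomb (- 2%:R) a 0 U W V) U).
Proof. by case: U W V => ? ? ? [? ? ?] [? ? ?] Ha; apply: vecP => /=; field. Qed.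

Section ConicLineNet.
Variables (K : closedFieldType) (n : nat) (A1 A2 A3 : seq (pt K)) (Q : 'M[K]_3) (l : pt K).
Hypotheses (n_gt1 : (1 < n)%N) (n_neq0 : n%:R != 0 :> K) (net : dual3net n A1 A2 A3)
  (irrQ : irreducible_conic Q) (conicQ : {in A1 ++ A2, forall P, on_conic Q P})
  (onl : {in A3, forall P, inc P l}).

Let L := coords l.

Lemma nth01_in (A : seq (pt K)) : size A = n -> nth l A 0 \in A /\ nth l A 1 \in A.
Proof. by move=> sA; split; apply: mem_nth; rewrite sA // ltnW. Qed.

Lemma dotl_onl P : P \in A3 -> dot L (coords P) = 0.
Proof. by move/onl; rewrite incE dotC => /eqP. Qed.

Lemma count_onl3 : count (fun P => inc P l) A3 = n.
Proof.
have [_ <-] := net_uniq_size3 net; apply/eqP; rewrite -all_count; exact/allP.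
Qed.

(* [l] meets [A3] in [n > 1] points, so it cannot meet [A1] or [A2]. *)
Lemma coords_offl P : P \in A1 ++ A2 -> dot (coords P) L != 0.
Proof.
have [_ s3] := net_uniq_size3 net; have [R3 _] := nth01_in s3.
have lA3 := meets_inc R3 (onl R3).
rewrite -incE mem_cat => /orP [] HP; apply/negP => Pl.
- by move: n_gt1; rewrite -count_onl3 (net_count13_3 net (meets_inc HP Pl) lA3).
- by move: n_gt1; rewrite -count_onl3 (net_count23_3 net (meets_inc HP Pl) lA3).
Qed.

Lemma conic_coords P : P \in A1 ++ A2 -> qform Q (coords P) = 0.
Proof. by move/conicQ; rewrite on_conicE => /eqP. Qed.

Lemma exists_conic_onl : exists2 U, U <> vzero K & dot L U = 0 /\ qform Q U = 0.
Proof.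
have [u3 s3] := net_uniq_size3 net.
have P12 : nth l A3 0 != nth l A3 1 by rewrite nth_uniq ?s3 // (leq_trans _ n_gt1).
have [a [b [Un0 qU]]] := line_meets_conic Q (cross_coords_neq0 P12).
exists (vcomb a b 0 (coords (nth l A3 0)) (coords (nth l A3 1)) (coords (nth l A3 1))) => //.
have [P1 P2] := nth01_in s3.
by split=> //; rewrite dot_vcomb !dotl_onl // !mulr0 !addr0.
Qed.

Section StandardFrame.
Variables (U W V : vec K) (cQ : K).
Hypotheses (frameUWV : det U W V != 0) (Ul : dot L U = 0) (Vl : dot L V != 0) (cQ0 : cQ != 0)
  (qformQ : forall x, qform Q x = cQ * (fb U W V x ^+ 2 - fa U W V x * fc U W V x)).

Let fA := fa U W V.
Let fB := fb U W V.
Let fC := fc U W V.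

Lemma fc_conic_neq0 P : P \in A1 ++ A2 -> fC (coords P) != 0.
Proof.
move=> HP; apply: contra (coords_offl HP) => /eqP c0.
have /eqP := conic_coords HP; rewrite qformQ -/fB -/fC c0 mulr0 subr0 mulf_eq0 (negbTE cQ0).
rewrite sqrf_eq0 => /eqP b0.
by rewrite (vcomb_frame (coords P) frameUWV) -/fA -/fB -/fC b0 c0 dotC dot_vcomb Ul !mul0r
  !mulr0 !addr0.
Qed.

Definition rho P := fB (coords P) / fC (coords P).

Lemma coords_conic P : P \in A1 ++ A2 ->
  coords P = vscale (fC (coords P)) (vcomb (rho P ^+ 2) (rho P) 1 U W V).
Proof.
move=> HP; have c0 := fc_conic_neq0 HP.
have /eqP := conic_coords HP; rewrite qformQ -/fA -/fB -/fC mulf_eq0 (negbTE cQ0) subr_eq0.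
move=> /eqP E.
rewrite {1}(vcomb_frame (coords P) frameUWV) -/fA -/fB -/fC vscale_vcomb /rho.
have -> : fA (coords P) = fB (coords P) ^+ 2 / fC (coords P) by rewrite E; field.
by congr vcomb; field.
Qed.

Lemma rho_inj : {in A1 ++ A2 &, injective rho}.
Proof.
move=> P P' HP HP' E; apply: (@coords_scale_inj _ P P' (fC (coords P) / fC (coords P'))).
have c0 := fc_conic_neq0 HP'; set cP := fC (coords P); set cP' := fC (coords P') in c0 *.
by rewrite (coords_conic HP) (coords_conic HP') -/cP -/cP' E; exact: vscale_div.
Qed.

Let s1 := dot L W.
Let s2 := dot L V.

(* Symmetric in the parameters [r], [s] of a chord; it determines where the chord meets [l]. *)
Let theta r s := s1 * r * s + s2 * (r + s).

Lemma onl_frame R : dot R L = 0 -> fB R * s1 + fC R * s2 = 0.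
Proof.
by rewrite dotC {1}(vcomb_frame R frameUWV) dot_vcomb Ul mulr0 add0r.
Qed.

Lemma chord_onl R x y : x \in A1 ++ A2 -> y \in A1 ++ A2 -> x != y ->
  dot R L = 0 -> det R (coords x) (coords y) = 0 ->
  fB R * theta (rho x) (rho y) = s2 * fA R.
Proof.
move=> Hx Hy xy RL.
have rs : rho x != rho y by apply: contra xy => /eqP /rho_inj; move=> /(_ Hx Hy) ->.
have cx := fc_conic_neq0 Hx; have cy := fc_conic_neq0 Hy.
have Rs := onl_frame RL.
rewrite (coords_conic Hx) (coords_conic Hy) {1}(vcomb_frame R frameUWV) -/fA -/fB -/fC.
rewrite !vscale_vcomb det_vcomb.
set ra := fA R; set rb := fB R; set rc := fC R; set r := rho x in rs *; set s := rho y in rs *.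
set cx' := fC (coords x) in cx *; set cy' := fC (coords y) in cy *.
have -> : det3 ra rb rc (cx' * r ^+ 2) (cx' * r) (cx' * 1) (cy' * s ^+ 2) (cy' * s) (cy' * 1) =
    cx' * cy' * (r - s) * (ra - rb * (r + s) + rc * r * s) by rewrite /det3; ring.
move/eqP => H0; have /eqP Era : ra - rb * (r + s) + rc * r * s == 0.
  apply: contraLR H0 => Hne; apply: mulf_neq0 frameUWV; apply: mulf_neq0 Hne.
  by apply: mulf_neq0; [exact: mulf_neq0 | rewrite subr_eq0].
apply/eqP; rewrite -subr_eq0; apply/eqP.
have -> : rb * theta r s - s2 * ra =
    r * s * (rb * s1 + rc * s2) - s2 * (ra - rb * (r + s) + rc * r * s) by rewrite /theta; ring.
by rewrite Rs Era !mulr0 subr0.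
Qed.

(* The chord [xy] meets [A3] in a point [R] of [l], and the line [x'R] meets [A2] in [y']. *)
Lemma chord_step x y x' : x \in A1 -> y \in A2 -> x' \in A1 ->
  exists2 y', y' \in A2 & theta (rho x) (rho y) = theta (rho x') (rho y').
Proof.
move=> x1 y2 x1'.
have in1 z : z \in A1 -> z \in A1 ++ A2 by rewrite mem_cat => ->.
have in2 z : z \in A2 -> z \in A1 ++ A2 by rewrite mem_cat orbC => ->.
have xy : x != y by apply/eqP => E; move: (net_disjoint12 net x1); rewrite E y2.
have /hasP [R R3] : has (fun P => inc P (join x y)) A3.
  rewrite has_count (net_count12_3 net (meets_inc x1 (join_incl xy)) _) //.
  exact: meets_inc y2 (join_incr xy).
rewrite inc_join // => /eqP RL.
have Rl : dot (coords R) L = 0 by rewrite dotC dotl_onl.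
have x'R : x' != R by apply/eqP => E; move: (net_disjoint13 net x1'); rewrite E R3.
have /hasP [y' y2'] : has (fun P => inc P (join x' R)) A2.
  rewrite has_count (net_count13_2 net (meets_inc x1' (join_incl x'R)) _) //.
  exact: meets_inc R3 (join_incr x'R).
rewrite inc_join // det_cycle det_cycle detC23 oppr_eq0 => /eqP y'L.
have x'y' : x' != y' by apply/eqP => E; move: (net_disjoint12 net x1'); rewrite E y2'.
exists y' => //.
have E1 := chord_onl (in1 _ x1) (in2 _ y2) xy Rl RL.
have E2 := chord_onl (in1 _ x1') (in2 _ y2') x'y' Rl y'L.
have rb0 : fB (coords R) != 0.
  apply/eqP => rb0; apply: (@coords_neq0 _ R); have Rs := onl_frame Rl.
  move: E1; rewrite rb0 mul0r => /esym/eqP; rewrite mulf_eq0 (negbTE Vl) /= => /eqP ra0.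
  move: Rs; rewrite rb0 mul0r add0r => /eqP; rewrite mulf_eq0 (negbTE Vl) orbF => /eqP rc0.
  rewrite (vcomb_frame (coords R) frameUWV) -/fA -/fB -/fC ra0 rb0 rc0.
  by apply: vecP => /=; ring.
by apply: (mulfI rb0); rewrite E1 E2.
Qed.

Lemma s1_neq0 : s1 != 0.
Proof.
apply/negP => /eqP s10.
have [u1 size1] := net_uniq_size1 net; have [u2 size2] := net_uniq_size2 net.
have [x1 x1'] := nth01_in size1; set x := nth l A1 0 in x1 *; set x' := nth l A1 1 in x1' *.
have xx' : x != x' by rewrite /x /x' nth_uniq ?size1 // ltnW.
have in2 z : z \in A2 -> z \in A1 ++ A2 by rewrite mem_cat orbC => ->.
have uS : uniq (map rho A2) by rewrite map_inj_in_uniq // => y y' /in2 Hy /in2; exact: rho_inj.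
set k := rho x - rho x'.
have kS : {in map rho A2, forall v, v + k \in map rho A2}.
  move=> _ /mapP [y y2 ->]; have [y' y2' E] := chord_step x1 y2 x1'.
  move: E; rewrite /theta s10 !mul0r !add0r => /(mulfI Vl) E.
  by apply/mapP; exists y' => //; apply: (addrI (rho x')); rewrite -E /k; ring.
have /eqP := translation_stable uS kS.
rewrite size_map size2 -mulr_natr mulf_eq0 (negbTE n_neq0) orbF subr_eq0 => /eqP Ex.
by move: xx'; rewrite (rho_inj _ _ Ex) ?eqxx // mem_cat ?x1 ?x1'.
Qed.

(* The reparametrization [m = 1 + (s1/s2) rho] turns chords through a point of [l] into
   scalings: [mm r * mm s = 1 + (s1 / s2^2) theta r s]. *)
Let mm r := 1 + s1 / s2 * r.

Lemma mm_neq0 P : P \in A1 ++ A2 -> mm (rho P) != 0.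
Proof.
move=> HP; apply: contra (coords_offl HP) => /eqP m0.
rewrite [coords P](coords_conic HP) dotC dot_vscale dot_vcomb Ul -/s1 -/s2.
have -> : rho P ^+ 2 * 0 + rho P * s1 + 1 * s2 = s2 * mm (rho P) by rewrite /mm; field.
by rewrite m0 !mulr0.
Qed.

Lemma mm_mul_theta r s : mm r * mm s = 1 + s1 / s2 ^+ 2 * theta r s.
Proof. by rewrite /mm /theta; field. Qed.

Lemma mm_pow x x' : x \in A1 -> x' \in A1 -> mm (rho x) ^+ n = mm (rho x') ^+ n.
Proof.
move=> x1 x1'; have [u2 size2] := net_uniq_size2 net.
have in2 z : z \in A2 -> z \in A1 ++ A2 by rewrite mem_cat orbC => ->.
have m0' : mm (rho x') != 0 by apply: mm_neq0; rewrite mem_cat x1'.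
set S := map (fun y => mm (rho y)) A2; set k := mm (rho x) / mm (rho x').
have uS : uniq S.
  rewrite map_inj_in_uniq // => y y' /in2 Hy /in2 Hy'.
  by move/addrI/(mulfI (mulf_neq0 s1_neq0 (invr_neq0 Vl))); exact: rho_inj.
have S0 : 0 \notin S by apply/mapP => -[y /in2 /mm_neq0 + /esym/eqP] => /negP.
have kS : {in S, forall v, k * v \in S}.
  move=> _ /mapP [y y2 ->]; have [y' y2' E] := chord_step x1 y2 x1'.
  apply/mapP; exists y' => //; apply: (mulfI m0').
  have -> : mm (rho x') * (k * mm (rho y)) = mm (rho x) * mm (rho y) by rewrite /k; field.
  by rewrite !mm_mul_theta E.
have := dilation_stable uS S0 kS; rewrite size_map size2 /k expr_div_n => E.
by rewrite -(divfK (expf_neq0 n m0') (mm (rho x) ^+ n)) E mul1r.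
Qed.

(* In the frame [(U', W', U)] the parameter of the conic is [mm rho]; the two points of
   the conic on [l] get parameters [0] and [oo]. *)
Lemma power_frame_of_standard : exists U' W' V' al, power_frame n L A1 U' W' V' al.
Proof.
have [_ size1] := net_uniq_size1 net; have [X0 _] := nth01_in size1.
have in1 z : z \in A1 -> z \in A1 ++ A2 by rewrite mem_cat => ->.
set cc := s1 / s2; have cc0 : cc != 0 by rewrite mulf_neq0 ?invr_neq0 ?s1_neq0.
exists (vcomb 1 (- cc) (cc ^+ 2) U W V), (vcomb (- 2%:R) cc 0 U W V), U,
  (mm (rho (nth l A1 0)) ^+ n); split=> //.
- by rewrite det_reparam mulf_neq0 ?oppr_eq0 ?expf_neq0.
- by rewrite dot_vcomb Ul -/s1 -/s2 /cc; field.
- by rewrite expf_neq0 ?mm_neq0 ?in1.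
move=> P HP; exists (mm (rho P)); first exact: mm_pow.
exists (fC (coords P) / cc ^+ 2).
  by rewrite mulf_neq0 ?invr_neq0 ?expf_neq0 ?fc_conic_neq0 ?in1.
by rewrite {1}(coords_conic (in1 _ HP)) -/fC (vcomb_reparam _ _ _ _ _ cc0).
Qed.

End StandardFrame.

Lemma conic_line_power_frame : exists U W V al, power_frame n L A1 U W V al.
Proof.
have [U0 U0n [U0l qU0]] := exists_conic_onl.
have [_ size1] := net_uniq_size1 net; have [X0 _] := nth01_in size1.
have {X0}X0 : nth l A1 0 \in A1 ++ A2 by rewrite mem_cat X0.
have UX : cross U0 (coords (nth l A1 0)) <> vzero K.
  move=> E; have [k Ek] := cross_eq0_scale U0n E; move: (coords_offl X0).
  by rewrite Ek dotC dot_vscale U0l mulr0 eqxx.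
have [k [W [cQ [k0 frame0 cQ0 qE]]]] := conic_standard_frame irrQ qU0 (conic_coords X0) UX.
apply: (power_frame_of_standard frame0 _ _ cQ0 qE).
- by rewrite dot_vscale U0l mulr0.
- by rewrite dotC coords_offl.
Qed.

End ConicLineNet.

Section BinomialRoots.
Variable K : fieldType.
Implicit Types (F : {poly K}) (a c t : K) (rs : seq K).

Lemma binomial_multiple F n c rs :
  uniq rs -> size rs = n.+1 -> {in rs, forall t, t ^+ n.+1 = c} ->
  (size F <= n.+2)%N -> {in rs, forall t, F.[t] = 0} ->
  F = F`_n.+1 *: ('X^(n.+1) - c%:P).
Proof.
move=> urs srs rsc sF rsF; apply/eqP; rewrite -subr_eq0; apply/eqP.
set G := F - _.
have sG : (size G <= n.+1)%N.
  apply/leq_sizeP => j; rewrite leq_eqVlt => /orP [/eqP <-|jn].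
    by rewrite /G coefB coefZ coefB coefXn coefC eqxx /= subr0 mulr1 subrr.
  have Fj : F`_j = 0 by move/leq_sizeP: sF; apply.
  by rewrite /G coefB coefZ coefB coefXn coefC Fj gtn_eqF // gtn_eqF ?(leq_trans _ jn) //=
    subrr mulr0 subrr.
apply/eqP; apply/negPn/negP => Gn.
have rsG : all (root G) rs.
  apply/allP => t Ht; rewrite /root /G !hornerE rsF // rsc //.
  by rewrite subrr mulr0 subrr.
by have := leq_trans (max_poly_roots Gn rsG urs) sG; rewrite srs ltnn.
Qed.

Lemma deriv2_binomial0 m a c :
  ((a *: ('X^(m.+3) - c%:P))^`()).[0] = 0 /\ ((a *: ('X^(m.+3) - c%:P))^`()^`()).[0] = 0.
Proof.
rewrite !derivZ derivB derivXn derivC subr0 derivMn derivXn.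
by rewrite !hornerZ !hornerMn !hornerXn !exprS !mul0r !mul0rn !mulr0.
Qed.

Lemma horner_linear (a0 a1 t : K) : (a1%:P * 'X + a0%:P).[t] = a0 + a1 * t.
Proof. by rewrite !hornerE addrC. Qed.

Lemma size_linear_exp (a0 a1 : K) k : (size ((a1%:P * 'X + a0%:P) ^+ k)%R <= k.+1)%N.
Proof.
apply: leq_trans (size_poly_exp_leq _ _) _; rewrite ltnS.
have : (size (a1%:P * 'X + a0%:P)%R <= 2)%N.
  by rewrite size_MXaddC; case: ifP => // _; rewrite ltnS size_polyC_leq1.
by case: (size _) => [|[|[|//]]] _; rewrite ?mul0n ?mul1n.
Qed.

Lemma horner0_linear_exp (a0 a1 : K) k : ((a1%:P * 'X + a0%:P) ^+ k).[0] = a0 ^+ k.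
Proof. by rewrite horner_exp horner_linear mulr0 addr0. Qed.

Lemma deriv_linear_exp (a0 a1 : K) k :
  ((a1%:P * 'X + a0%:P) ^+ k.+1)^`() = a1%:P * (a1%:P * 'X + a0%:P) ^+ k *+ k.+1.
Proof. by rewrite deriv_exp derivMXaddC derivC mul0r addr0. Qed.

(* [e1], [e2] say that the first two derivatives of [q^(m+3) - al p^(m+3)] vanish at [0],
   where [p = p0 + p1 t] and [q = q0 + q1 t]. *)
Lemma moebius_taylor_cases m (p0 p1 q0 q1 al : K) :
  al != 0 -> p0 * q1 - p1 * q0 != 0 ->
  q1 * q0 ^+ m.+2 = al * (p1 * p0 ^+ m.+2) ->
  q1 * (q1 * q0 ^+ m.+1) = al * (p1 * (p1 * p0 ^+ m.+1)) ->
  (q0 = 0 /\ p1 = 0) \/ (q1 = 0 /\ p0 = 0).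
Proof.
move=> al0 nd e1 e2.
have [q10|q1n] := eqVneq q1 0.
  right; split=> //; move: e1; rewrite q10 mul0r => /esym/eqP.
  rewrite mulf_eq0 (negbTE al0) /= mulf_eq0 => /orP [/eqP p10|].
    by move: nd; rewrite q10 p10 mulr0 mul0r subrr eqxx.
  by rewrite expf_eq0 /= => /eqP.
have [q0z|q0n] := eqVneq q0 0.
  left; split=> //; move: e1; rewrite q0z expr0n /= mulr0 => /esym/eqP.
  rewrite mulf_eq0 (negbTE al0) /= mulf_eq0 => /orP [/eqP //|].
  by rewrite expf_eq0 /= => /eqP p0z; move: nd; rewrite q0z p0z mulr0 mul0r subrr eqxx.
exfalso; move: e1 e2; rewrite !exprS.
move: (q0 ^+ m) (p0 ^+ m) (expf_neq0 m q0n) => X Y Xn e1 e2.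
have nz : al * (p1 * (p0 * (p0 * Y))) != 0 by rewrite -e1 !mulf_neq0.
have : al * (p1 * (p0 * (p0 * Y))) * (p0 * q1 - p1 * q0) = 0.
  have -> : al * (p1 * (p0 * (p0 * Y))) * (p0 * q1 - p1 * q0) =
     q1 * p0 * (al * (p1 * (p0 * (p0 * Y)))) - p0 * q0 * (al * (p1 * (p1 * (p0 * Y)))) by ring.
  by rewrite -e1 -e2; ring.
by move/eqP; rewrite mulf_eq0 (negbTE nz) (negbTE nd).
Qed.

Lemma moebius_power_cases m (p0 p1 q0 q1 al al' : K) rs :
  m.+3%:R != 0 :> K -> m.+2%:R != 0 :> K -> al != 0 -> p0 * q1 - p1 * q0 != 0 ->
  uniq rs -> size rs = m.+3 -> {in rs, forall t, t ^+ m.+3 = al'} ->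
  {in rs, forall t, (q0 + q1 * t) ^+ m.+3 = al * (p0 + p1 * t) ^+ m.+3} ->
  (q0 = 0 /\ p1 = 0) \/ (q1 = 0 /\ p0 = 0).
Proof.
move=> n0 n1 al0 nd urs srs rsal' rsal.
set p := p1%:P * 'X + p0%:P; set q := q1%:P * 'X + q0%:P.
set F := q ^+ m.+3 - al *: p ^+ m.+3.
have sF : (size F <= m.+4)%N.
  rewrite (leq_trans (size_polyD _ _)) // size_polyN geq_max size_linear_exp /=.
  exact: leq_trans (size_scale_leq _ _) (size_linear_exp _ _ _).
have rsF : {in rs, forall t, F.[t] = 0}.
  by move=> t Ht; rewrite /F hornerD hornerN hornerZ !horner_exp !horner_linear rsal // subrr.
have [dF0 d2F0] := deriv2_binomial0 m F`_m.+3 al'.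
rewrite -(binomial_multiple urs srs rsal' sF rsF) in dF0 d2F0.
move: dF0 d2F0; rewrite /F derivB derivZ !deriv_linear_exp derivB derivZ !derivMn !deriv_mulC.
rewrite !deriv_linear_exp => dF0 d2F0.
rewrite hornerD hornerN hornerZ !hornerMn !hornerCM !horner0_linear_exp in dF0.
rewrite hornerD hornerN hornerZ !hornerMn !hornerCM !hornerMn !hornerCM !horner0_linear_exp in d2F0.
apply: (@moebius_taylor_cases m _ _ _ _ _ al0 nd).
- move: dF0; rewrite mulrnAr -mulrnBl -mulr_natr => /eqP.
  by rewrite mulf_eq0 (negbTE n0) orbF subr_eq0 => /eqP.
- move: d2F0; rewrite !mulrnAr -!mulrnA -mulrnBl -mulr_natr natrM => /eqP.
  by rewrite !mulf_eq0 (negbTE n0) (negbTE n1) !orbF subr_eq0 => /eqP.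
Qed.

End BinomialRoots.

Section ConicParametrization.
Variables (K : closedFieldType) (a0 a1 a2 b0 b1 b2 c0 c1 c2 : K).
Hypothesis nondeg : det3 a0 b0 c0 a1 b1 c1 a2 b2 c2 != 0.

Let a t := a0 + a1 * t + a2 * t ^+ 2.
Let b t := b0 + b1 * t + b2 * t ^+ 2.
Let c t := c0 + c1 * t + c2 * t ^+ 2.

(* The coefficients of the quartic [b^2 - a c]. *)
Let defect : seq K :=
  [:: b0 ^+ 2 - a0 * c0; 2%:R * b0 * b1 - a0 * c1 - a1 * c0;
      b1 ^+ 2 + 2%:R * b0 * b2 - a0 * c2 - a1 * c1 - a2 * c0;
      2%:R * b1 * b2 - a1 * c2 - a2 * c1; b2 ^+ 2 - a2 * c2].

Lemma defect_eq0 rs : uniq rs -> (5 <= size rs)%N ->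
  {in rs, forall t, b t ^+ 2 = a t * c t} -> forall i, defect`_i = 0.
Proof.
move=> urs srs rsE i; rewrite -coef_Poly; suff -> : Poly defect = 0 by rewrite coef0.
apply/eqP; apply/negPn/negP => Dn.
have rsD : all (root (Poly defect)) rs.
  apply/allP => t Ht; rewrite /root horner_Poly /=; apply/eqP.
  by transitivity (b t ^+ 2 - a t * c t); [rewrite /a /b /c; ring|rewrite rsE // subrr].
have := leq_trans (leq_ltn_trans srs (max_poly_roots Dn rsD urs)) (size_Poly defect).
by rewrite ltnn.
Qed.

Hypothesis defect0 : forall i, defect`_i = 0.

Lemma conic_sq t : b t ^+ 2 = a t * c t.
Proof.
have := defect0; move=> D; move: (D 0%N) (D 1%N) (D 2%N) (D 3%N) (D 4%N) => /= E0 E1 E2 E3 E4.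
apply/eqP; rewrite -subr_eq0; apply/eqP.
have -> : b t ^+ 2 - a t * c t = (b0 ^+ 2 - a0 * c0) + (2%:R * b0 * b1 - a0 * c1 - a1 * c0) * t +
    (b1 ^+ 2 + 2%:R * b0 * b2 - a0 * c2 - a1 * c1 - a2 * c0) * t ^+ 2 +
    (2%:R * b1 * b2 - a1 * c2 - a2 * c1) * t ^+ 3 + (b2 ^+ 2 - a2 * c2) * t ^+ 4.
  by rewrite /a /b /c; ring.
by rewrite E0 E1 E2 E3 E4; ring.
Qed.

Lemma conic_sq_deriv t :
  (a1 + 2%:R * a2 * t) * c t = 2%:R * b t * (b1 + 2%:R * b2 * t) - a t * (c1 + 2%:R * c2 * t).
Proof.
have := defect0; move=> D; move: (D 1%N) (D 2%N) (D 3%N) (D 4%N) => /= E1 E2 E3 E4.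
apply/eqP; rewrite -subr_eq0; apply/eqP.
have -> : (a1 + 2%:R * a2 * t) * c t -
    (2%:R * b t * (b1 + 2%:R * b2 * t) - a t * (c1 + 2%:R * c2 * t)) =
  - ((2%:R * b0 * b1 - a0 * c1 - a1 * c0) +
     2%:R * (b1 ^+ 2 + 2%:R * b0 * b2 - a0 * c2 - a1 * c1 - a2 * c0) * t +
     3%:R * (2%:R * b1 * b2 - a1 * c2 - a2 * c1) * t ^+ 2 + 4%:R * (b2 ^+ 2 - a2 * c2) * t ^+ 3).
  by rewrite /a /b /c; ring.
by rewrite E1 E2 E3 E4; ring.
Qed.

(* At a zero of [a], [b] vanishes, and so does [a'] since [(a r : b r : c r)] cannot be 0. *)
Lemma conic_root_double r : a r = 0 -> b r = 0 /\ a1 + 2%:R * a2 * r = 0.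
Proof.
move=> ar; have br : b r = 0 by apply/eqP; rewrite -sqrf_eq0 conic_sq ar mul0r.
split=> //; have := conic_sq_deriv r; rewrite ar br !mulr0 !mul0r subrr => /eqP.
rewrite mulf_eq0 => /orP [/eqP //|/eqP cr]; move: nondeg.
have -> : det3 a0 b0 c0 a1 b1 c1 a2 b2 c2 = det3 (a r) (b r) (c r) a1 b1 c1 a2 b2 c2.
  by rewrite /det3 /a /b /c; ring.
by rewrite ar br cr /det3 !mul0r !subrr addr0 eqxx.
Qed.

Lemma conic_factor : exists lam p0 p1 q0 q1,
  [/\ lam != 0, p0 * q1 - p1 * q0 != 0, b0 = lam * p0 * q0, b2 = lam * p1 * q1 &
      forall t, a t = lam * (p0 + p1 * t) ^+ 2 /\ b t = lam * (p0 + p1 * t) * (q0 + q1 * t)].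
Proof.
have E4 : b2 ^+ 2 = a2 * c2 by apply/eqP; rewrite -subr_eq0; apply/eqP; exact: (defect0 4).
have [a2z|a2n] := eqVneq a2 0.
  have [a1z|a1n] := eqVneq a1 0; last first.
    have ar : a (- a0 / a1) = 0 by rewrite /a a2z mul0r addr0; field.
    have [_] := conic_root_double ar.
    by rewrite a2z mulr0 mul0r addr0 => /eqP; rewrite (negbTE a1n).
  have b2z : b2 = 0 by apply/eqP; rewrite -sqrf_eq0 E4 a2z mul0r.
  have [a0n b1n] : a0 != 0 /\ b1 != 0.
    by split; apply: contraNneq nondeg => z; rewrite /det3 z a1z a2z ?b2z; apply/eqP; ring.
  exists a0^-1, a0, 0, b0, b1; split.
  - by rewrite invr_eq0.
  - by rewrite mul0r subr0 mulf_neq0.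
  - by field.
  - by rewrite b2z !mulr0 mul0r.
  - by move=> t; rewrite /a /b a1z a2z b2z; split; field.
have [r Hr] := @GRing.solve_monicpoly K 2
  (fun i => if i == 0%N then - a0 / a2 else - a1 / a2) isT.
rewrite !big_ord_recl big_ord0 /= addr0 in Hr.
have ar : a r = 0 by rewrite /a Hr; field.
have [br dr] := conic_root_double ar.
have a1E : a1 = - (2%:R * a2 * r) by apply/eqP; rewrite -subr_eq0 opprK dr.
have a0E : a0 = a2 * r ^+ 2.
  by apply/eqP; rewrite -subr_eq0; apply/eqP; rewrite -[RHS]ar /a a1E; ring.
have b0E : b0 = - (b1 * r) - b2 * r ^+ 2.
  by apply/eqP; rewrite -subr_eq0; apply/eqP; rewrite -[RHS]br /b; ring.
exists a2^-1, (- (a2 * r)), a2, (b1 + b2 * r), b2; split.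
- by rewrite invr_eq0.
- apply: contraNneq nondeg => H0.
  have b1E : b1 = - (2%:R * b2 * r).
    have : a2 * (b1 + 2%:R * b2 * r) = 0 by rewrite -oppr0 -H0; ring.
    by move/eqP; rewrite mulf_eq0 (negbTE a2n) /= addr_eq0 => /eqP.
  by rewrite /det3 b0E a0E a1E b1E; apply/eqP; ring.
- by rewrite b0E; field.
- by field.
- by move=> t; rewrite /a /b a0E a1E b0E; split; field.
Qed.

End ConicParametrization.

Lemma conic_param_power_moebius (K : closedFieldType) m (a0 a1 a2 b0 b1 b2 c0 c1 c2 al al' : K)
    rs :
  m.+3%:R != 0 :> K -> m.+2%:R != 0 :> K -> (2 <= m)%N -> al != 0 ->
  det3 a0 b0 c0 a1 b1 c1 a2 b2 c2 != 0 ->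
  uniq rs -> size rs = m.+3 -> {in rs, forall t, t ^+ m.+3 = al'} ->
  {in rs, forall t, exists2 u, u ^+ m.+3 = al & exists2 mu, mu != 0 &
     [/\ a0 + a1 * t + a2 * t ^+ 2 = mu, b0 + b1 * t + b2 * t ^+ 2 = mu * u &
         c0 + c1 * t + c2 * t ^+ 2 = mu * u ^+ 2]} ->
  b0 = 0 /\ b2 = 0.
Proof.
move=> n0 n1 m2 al0 nondeg urs srs rsal' rsparam.
have rsE : {in rs, forall t, (b0 + b1 * t + b2 * t ^+ 2) ^+ 2 =
    (a0 + a1 * t + a2 * t ^+ 2) * (c0 + c1 * t + c2 * t ^+ 2)}.
  by move=> t /rsparam [u _ [mu _ [-> -> ->]]]; ring.
have [|lam [p0 [p1 [q0 [q1 [lam0 nd b0E b2E pq]]]]]] := conic_factor nondeg.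
  by apply: defect_eq0 urs _ rsE; rewrite srs.
rewrite b0E b2E.
suff [[-> ->]|[-> ->]] : (q0 = 0 /\ p1 = 0) \/ (q1 = 0 /\ p0 = 0) by split; ring.
apply: moebius_power_cases n0 n1 al0 nd urs srs rsal' _ => t Ht.
have [u ual [mu mu0 [Ea Eb _]]] := rsparam t Ht.
have [pa pb] := pq t.
have pn0 : p0 + p1 * t != 0.
  by apply: contraNneq mu0 => pz; rewrite -Ea pa pz expr0n mulr0.
have -> : q0 + q1 * t = u * (p0 + p1 * t).
  by apply: (mulfI (mulf_neq0 lam0 pn0)); rewrite -pb Eb -Ea pa; ring.
by rewrite exprMn ual mulrC.
Qed.

Lemma power_frame_eq_mem (K : fieldType) n (L : vec K) (A B : seq (pt K)) U W V al :
  A =i B -> power_frame n L A U W V al -> power_frame n L B U W V al.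
Proof. by move=> AB [? ? ? ? HA]; split=> // P; rewrite -AB; exact: HA. Qed.

Definition frame_param (K : fieldType) (U W V : vec K) (P : pt K) :=
  fb U W V (coords P) / fa U W V (coords P).

Section PowerFrameParam.
Variables (K : fieldType) (n : nat) (L : vec K) (A : seq (pt K)) (U W V : vec K) (al : K).
Hypothesis frameA : power_frame n L A U W V al.

Lemma power_frame_paramP P : P \in A ->
  frame_param U W V P ^+ n = al /\ exists2 mu, mu != 0 &
    coords P = vscale mu (vcomb 1 (frame_param U W V P) (frame_param U W V P ^+ 2) U W V).
Proof.
case: frameA => frame _ _ _ paramA HP; have [t tal [mu mu0 E]] := paramA P HP.
suff -> : frame_param U W V P = t by split=> //; exists mu.
by rewrite /frame_param E vscale_vcomb fa_vcomb // fb_vcomb //; field.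
Qed.

Lemma frame_param_inj : {in A &, injective (frame_param U W V)}.
Proof.
move=> P P' HP HP' E.
have [_ [mu mu0 EP]] := power_frame_paramP HP; have [_ [mu' mu0' EP']] := power_frame_paramP HP'.
by apply: (@coords_scale_inj _ P P' (mu / mu')); rewrite EP EP' E; exact: vscale_div.
Qed.

End PowerFrameParam.

(* Reading the points of [A] in the first frame, the parametrization of the second one
   becomes a quadratic map onto the conic [y^2 = x z]. *)
Lemma power_frames_same_line (K : closedFieldType) m (L S : vec K) (A : seq (pt K))
    U W V al U' W' V' al' :
  m.+3%:R != 0 :> K -> m.+2%:R != 0 :> K -> (2 <= m)%N -> uniq A -> size A = m.+3 ->
  power_frame m.+3 L A U W V al -> power_frame m.+3 S A U' W' V' al' ->
  dot L U' = 0 /\ dot L V' = 0.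
Proof.
move=> n0 n1 m2 uA sA frameA frameA'.
have [frame LU LV al0 paramA] := frameA; have [frame' _ _ _ _] := frameA'.
set g := frame_param U' W' V'.
have urs : uniq (map g A) by rewrite map_inj_in_uniq //; exact: frame_param_inj frameA'.
have srs : size (map g A) = m.+3 by rewrite size_map.
have rsal' : {in map g A, forall t, t ^+ m.+3 = al'}.
  by move=> _ /mapP [P HP ->]; case: (power_frame_paramP frameA' HP).
set fA := fa U W V; set fB := fb U W V; set fC := fc U W V.
have nondeg : det3 (fA U') (fB U') (fC U') (fA W') (fB W') (fC W') (fA V') (fB V') (fC V') != 0.
  by move: frame'; rewrite (det_frame _ _ _ frame) mulf_eq0 negb_or => /andP [].
have [] := conic_param_power_moebius n0 n1 m2 al0 nondeg urs srs rsal'.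
  move=> _ /mapP [P HP ->]; set t := g P.
  have [_ [mu' mu0' E']] := power_frame_paramP frameA' HP.
  have [u ual [mu mu0 E]] := paramA P HP.
  exists u => //; exists (mu / mu'); first by rewrite mulf_neq0 ?invr_neq0.
  have X : vcomb 1 t (t ^+ 2) U' W' V' =
      vcomb (mu / mu') (mu / mu' * u) (mu / mu' * u ^+ 2) U W V.
    rewrite (vscaleK (vcomb 1 t (t ^+ 2) U' W' V') mu0') -E' E vscale_vscale vscale_vcomb.
    by congr vcomb; ring.
  have coordsX (f : vec K -> K) :
      (forall a b c X Y Z, f (vcomb a b c X Y Z) = a * f X + b * f Y + c * f Z) ->
      f U' + f W' * t + f V' * t ^+ 2 = f (vcomb 1 t (t ^+ 2) U' W' V').
    by move=> fl; rewrite fl; ring.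
  split.
  - by rewrite (coordsX _ (fa_linear U W V)) X fa_vcomb.
  - by rewrite (coordsX _ (fb_linear U W V)) X fb_vcomb.
  - by rewrite (coordsX _ (fc_linear U W V)) X fc_vcomb.
move=> fBU fBV; split.
- by rewrite (vcomb_frame U' frame) -/fA -/fB -/fC fBU dot_vcomb LU LV !mulr0 mul0r !addr0.
- by rewrite (vcomb_frame V' frame) -/fA -/fB -/fC fBV dot_vcomb LU LV !mulr0 mul0r !addr0.
Qed.

Lemma natr_neq0_le_char (K : fieldType) n k :
  (forall p, p \in [pchar K] -> (n < p)%N) -> (0 < k <= n)%N -> k%:R != 0 :> K.
Proof.
move=> charK /andP [k0 kn]; apply/negP => kK; have [p pK] := natf0_pchar k0 kK.
have := dvdn_pcharf pK k; rewrite kK => /(dvdn_leq k0) pk.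
by have := leq_ltn_trans (leq_trans pk kn) (charK p pK); rewrite ltnn.
Qed.

Theorem proposition4p12 (K : closedFieldType) (n : nat)
  (G1 G2 G3 D1 D2 D3 : seq (pt K)) (CG CD : 'M[K]_3) (l s : pt K) :
  (forall p : nat, p \in [pchar K] -> (5 <= p)%N /\ (n < p)%N) ->
  dual3net n G1 G2 G3 -> dual3net n D1 D2 D3 ->
  irreducible_conic CG -> {in G1 ++ G2, forall P, on_conic CG P} ->
  {in G3, forall P, inc P l} ->
  irreducible_conic CD -> {in D1 ++ D2, forall P, on_conic CD P} ->
  {in D3, forall P, inc P s} ->
  (5 <= n)%N -> G1 =i D1 ->
  l = s.
Proof.
move=> charK netG netD irrG conicG onl irrD conicD ons n5 GD.
case: n n5 charK netG netD => [|[|[|m]]] // m2 charK netG netD.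
have charn p : p \in [pchar K] -> (m.+3 < p)%N by case/charK.
have n0 : m.+3%:R != 0 :> K by apply: natr_neq0_le_char charn _; rewrite /= leqnn.
have n1 : m.+2%:R != 0 :> K by apply: natr_neq0_le_char charn _; rewrite /= leqnSn.
have [U [W [V [al frameG]]]] := conic_line_power_frame (n := m.+3) isT n0 netG irrG conicG onl.
have [U' [W' [V' [al' frameD]]]] := conic_line_power_frame (n := m.+3) isT n0 netD irrD conicD ons.
have [uG sG] := net_uniq_size1 netG.
have frameD1 := power_frame_eq_mem (fun P => esym (GD P)) frameD.
have [lU' lV'] := power_frames_same_line n0 n1 m2 uG sG frameG frameD1.
case: frameD => frameD' sU' sV' _ _.
exact: coords_orthogonal2_eq (det_cross13_neq0 frameD') lU' lV' sU' sV'.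
Qed.
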